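(* Let ${\bf A},{\bf A}^\dagger$ be linear operators acting on real functions on a set $\Omega$ (on a common invariant domain) with $[{\bf A},{\bf A}^\dagger]=I$. Let $D:\Omega\times\mathbb N\to\mathbb R$ be functions such that $({\bf A}^\dagger_l)^nD(x,0)=D(x,n)$ for all $n\in\mathbb N$, $x\in\Omega$, and ${\bf A}_lD(x,0)=0$. Then ${\bf A}\rightarrow^Da$ and ${\bf A}^\dagger\rightarrow^Da^\dagger$. Consequently, for any polynomials $\alpha_n$, $0\le n\le m$, $\sum_{n=0}^m\alpha_n({\bf A}^\dagger){\bf A}^n\rightarrow^D\sum_{n=0}^m a^n\alpha_n(a^\dagger)$.
   Context: $\mathbb N=\{0,1,2,\dots\}$. On functions $f:\mathbb N\to\mathbb R$: $af(n)=nf(n-1)$, $a^\dagger f(n)=f(n+1)$. $[X,Y]=XY-YX$ and $I$ is the identity. Left/right actions: $(K_lD)(x,n)=(KD(\cdot,n))(x)$, $(\widehat K_rD)(x,n)=(\widehat KD(x,\cdot))(n)$; $K\rightarrow^D\widehat K$ means $K_lD=\widehat K_rD$. *)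

From HB Require Import structures.
From mathcomp Require Import all_boot all_order all_algebra.
From mathcomp Require Import reals.
Set Implicit Arguments. Unset Strict Implicit. Unset Printing Implicit Defensive.
Import Order.TTheory GRing.Theory Num.Theory.
Local Open Scope ring_scope.

Definition op (R : realType) (T : Type) := (T -> R) -> (T -> R).

(* a f (n) = n f(n-1)  (for n = 0 the value is 0 regardless of f(n.-1)) *)
Definition a_op (R : realType) : op R nat := fun f n => n%:R * f n.-1.
Definition adag_op (R : realType) : op R nat := fun f n => f n.+1.

Definition poly_op (R : realType) (T : Type) (p : {poly R}) (K : op R T) : op R T :=
  fun f x => \sum_(i < size p) p`_i * iter i K f x.

Definition left_act (R : realType) (Omega : Type) (K : op R Omega)
  (D : Omega -> nat -> R) : Omega -> nat -> R :=
  fun x n => K (fun y => D y n) x.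
Definition right_act (R : realType) (Omega : Type) (Kh : op R nat)
  (D : Omega -> nat -> R) : Omega -> nat -> R :=
  fun x n => Kh (D x) n.

(* K ->^D Kh  :<->  K_l D = Kh_r D *)
Definition intertwines (R : realType) (Omega : Type) (D : Omega -> nat -> R)
  (K : op R Omega) (Kh : op R nat) : Prop :=
  left_act K D = right_act Kh D.

Definition lhs_op (R : realType) (Omega : Type) (m : nat) (alpha : nat -> {poly R})
  (A Adag : op R Omega) : op R Omega :=
  fun f x => \sum_(n < m.+1) poly_op (alpha n) Adag (iter n A f) x.

Definition rhs_op (R : realType) (m : nat) (alpha : nat -> {poly R}) : op R nat :=
  fun g k => \sum_(n < m.+1) iter n (@a_op R) (poly_op (alpha n) (@adag_op R) g) k.

From HB Require Import structures.
From mathcomp Require Import all_boot all_order all_algebra.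
From mathcomp Require Import reals.
From mathcomp Require Import zify.
From Stdlib Require Import FunctionalExtensionality.
Set Implicit Arguments. Unset Strict Implicit. Unset Printing Implicit Defensive.
Import Order.TTheory GRing.Theory Num.Theory.
Local Open Scope ring_scope.

(* The commutation relation [A, A^dagger] = I together with A D(., 0) = 0
   forces A D(., k) = k D(., k-1) by induction on k, exactly as for the
   number-state basis of the harmonic oscillator; hence A^n D(., k) is the
   falling factorial k^_n times D(., k-n), while A^dagger^i D(., k) = D(., k+i).
   These are precisely the actions of a^n and a^dagger^i on the second
   argument, so every normally ordered polynomial in A, A^dagger is
   transported to the antinormally ordered polynomial in a, a^dagger. *)

Section OperatorIteration.

Variables (R : realType) (T : Type) (Dom : (T -> R) -> Prop) (K : op R T).

Definition linear_on : Prop :=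
  forall (c : R) f g, Dom f -> Dom g ->
    K (fun x => c * f x + g x) = (fun x => c * K f x + K g x).

Definition stable_on : Prop := forall f, Dom f -> Dom (K f).

(* Taking g := f in linear_on avoids needing 0 in Dom. *)
Lemma linear_on_scale : linear_on -> forall (c : R) f, Dom f ->
  K (fun x => c * f x) = (fun x => c * K f x).
Proof.
move=> Klin c f Df.
have -> : (fun x => c * f x) = (fun x => (c - 1) * f x + f x).
  by apply: functional_extensionality => x; rewrite mulrBl mul1r subrK.
rewrite Klin //; apply: functional_extensionality => x.
by rewrite mulrBl mul1r subrK.
Qed.

Lemma iter_stable_on : stable_on -> forall n f, Dom f -> Dom (iter n K f).
Proof. by move=> Kst; elim=> [|n IHn] f Df //=; apply/Kst/IHn. Qed.

Lemma iter_linear_on_scale : linear_on -> stable_on ->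
  forall n (c : R) f, Dom f ->
  iter n K (fun x => c * f x) = (fun x => c * iter n K f x).
Proof.
move=> Klin Kst; elim=> [|n IHn] c f Df //=.
by rewrite IHn // linear_on_scale //; apply: iter_stable_on.
Qed.

End OperatorIteration.

Lemma iter_a_op (R : realType) n (g : nat -> R) k :
  iter n (@a_op R) g k = (k ^_ n)%:R * g (k - n)%N.
Proof.
elim: n k => [|n IHn] k /=; first by rewrite subn0 mul1r.
rewrite /a_op IHn ffactnS natrM mulrA; congr (_ * g _); lia.
Qed.

Lemma iter_adag_op (R : realType) n (g : nat -> R) k :
  iter n (@adag_op R) g k = g (k + n)%N.
Proof.
elim: n k => [|n IHn] k /=; first by rewrite addn0.
by rewrite /adag_op IHn addSnnS.
Qed.

Section LadderKernel.

Variables (R : realType) (Omega : Type) (Dom : (Omega -> R) -> Prop).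
Variables (A Adag : op R Omega) (D : Omega -> nat -> R).

Hypothesis A_lin : linear_on Dom A.
Hypothesis Adag_lin : linear_on Dom Adag.
Hypothesis A_stable : stable_on Dom A.
Hypothesis Adag_stable : stable_on Dom Adag.
Hypothesis commA : forall f, Dom f -> (fun x => A (Adag f) x - Adag (A f) x) = f.
Hypothesis D0_dom : Dom (fun x => D x 0%N).
Hypothesis D_iter : forall n x, iter n Adag (fun y => D y 0%N) x = D x n.
Hypothesis A_D0 : forall x, A (fun y => D y 0%N) x = 0.

Local Notation Dcol k := (fun y => D y k).

Lemma Dcol_iter k : Dcol k = iter k Adag (Dcol 0%N).
Proof. by apply: functional_extensionality => y; rewrite D_iter. Qed.

Lemma Dcol_dom k : Dom (Dcol k).
Proof. by rewrite Dcol_iter; apply: iter_stable_on. Qed.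

Lemma iter_Adag_Dcol i k : iter i Adag (Dcol k) = Dcol (k + i)%N.
Proof. by rewrite Dcol_iter -iterD addnC -Dcol_iter. Qed.

Lemma Adag_Dcol k : Adag (Dcol k) = Dcol k.+1.
Proof. by rewrite -addn1 -iter_Adag_Dcol. Qed.

Lemma A_Dcol k : A (Dcol k) = (fun y => k%:R * D y k.-1).
Proof.
elim: k => [|k IHk].
  by apply: functional_extensionality => y; rewrite A_D0 mul0r.
have Adag_A_Dcol : Adag (A (Dcol k)) = (fun y => k%:R * D y k).
  rewrite IHk (linear_on_scale Adag_lin _ (Dcol_dom _)).
  case: k {IHk} => [|k]; first by apply: functional_extensionality => y; rewrite !mul0r.
  by rewrite Adag_Dcol.
apply: functional_extensionality => y.
have := congr1 (fun h => h y) (commA (Dcol_dom k)).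
rewrite /= -Adag_Dcol Adag_A_Dcol => /eqP; rewrite subr_eq => /eqP ->.
by rewrite -natr1 mulrDl mul1r addrC.
Qed.

Lemma iter_A_Dcol n k : iter n A (Dcol k) = (fun y => (k ^_ n)%:R * D y (k - n)%N).
Proof.
elim: n k => [|n IHn] k.
  by apply: functional_extensionality => y; rewrite /= subn0 mul1r.
rewrite iterSr A_Dcol (iter_linear_on_scale A_lin A_stable _ _ (Dcol_dom _)) IHn.
apply: functional_extensionality => y.
rewrite ffactnS natrM mulrA; congr (_ * D y _); lia.
Qed.

Lemma intertwines_a : intertwines D A (@a_op R).
Proof.
apply: functional_extensionality => x; apply: functional_extensionality => n.
by rewrite /left_act /right_act /a_op A_Dcol.
Qed.

Lemma intertwines_adag : intertwines D Adag (@adag_op R).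
Proof.
apply: functional_extensionality => x; apply: functional_extensionality => n.
by rewrite /left_act /right_act /adag_op Adag_Dcol.
Qed.

Lemma intertwines_normal_ordered m (alpha : nat -> {poly R}) :
  intertwines D (lhs_op m alpha A Adag) (rhs_op m alpha).
Proof.
apply: functional_extensionality => x; apply: functional_extensionality => k.
rewrite /left_act /right_act /lhs_op /rhs_op; apply: eq_bigr => n _.
rewrite iter_A_Dcol iter_a_op /poly_op mulr_sumr; apply: eq_bigr => i _.
rewrite (iter_linear_on_scale Adag_lin Adag_stable _ _ (Dcol_dom _)).
rewrite iter_Adag_Dcol iter_adag_op.
by rewrite mulrCA.
Qed.

End LadderKernel.

Theorem proposition3p1 (R : realType) (Omega : Type)
  (Dom : (Omega -> R) -> Prop) (A Adag : op R Omega) (D : Omega -> nat -> R)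
  (* Dom is a linear subspace *)
  (Dom_lin : forall (c : R) f g, Dom f -> Dom g -> Dom (fun x => c * f x + g x))
  (* A and Adag are linear on Dom and leave Dom invariant *)
  (A_lin : forall (c : R) f g, Dom f -> Dom g ->
     A (fun x => c * f x + g x) = (fun x => c * A f x + A g x))
  (Adag_lin : forall (c : R) f g, Dom f -> Dom g ->
     Adag (fun x => c * f x + g x) = (fun x => c * Adag f x + Adag g x))
  (A_inv : forall f, Dom f -> Dom (A f))
  (Adag_inv : forall f, Dom f -> Dom (Adag f))
  (* [A, Adag] = I on Dom *)
  (comm : forall f, Dom f -> (fun x => A (Adag f) x - Adag (A f) x) = f)
  (D0_dom : Dom (fun x => D x 0%N))
  (hD : forall n x, iter n Adag (fun y => D y 0%N) x = D x n)
  (hA0 : forall x, A (fun y => D y 0%N) x = 0) :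
  intertwines D A (@a_op R) /\ intertwines D Adag (@adag_op R) /\
  (forall (m : nat) (alpha : nat -> {poly R}),
     intertwines D (lhs_op m alpha A Adag) (rhs_op m alpha)).
Proof.
split; first exact: (intertwines_a Adag_lin Adag_inv comm D0_dom hD hA0).
split; first exact: (intertwines_adag hD).
exact: (intertwines_normal_ordered A_lin Adag_lin A_inv Adag_inv comm D0_dom hD hA0).
Qed.
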